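(* For every $\alpha\in\bar{\mathbb{Q}}$ we have $H(\alpha)\ge H(H(\alpha))$, with equality if and only if $H(\alpha)=a^b$ for some $a\in\mathbb{N}$ and some rational $b>0$.
   Context: $\bar{\mathbb{Q}}$ is the algebraic closure of $\mathbb{Q}$ in $\mathbb{C}$. $H:\bar{\mathbb{Q}}\to\bar{\mathbb{Q}}\cap[1,\infty)$ is the absolute multiplicative Weil height: for $\alpha$ of degree $d$ with $a_0>0$ the leading coefficient of a minimal polynomial of $\alpha$ in $\mathbb{Z}[t]$ and conjugates $\alpha_1,\dots,\alpha_d$, $H(\alpha)=\big(a_0\prod_i\max\{1,|\alpha_i|\}\big)^{1/d}$ (this value is again algebraic, so $H$ can be iterated). *)

From HB Require Import structures.
From mathcomp Require Import all_boot all_order all_algebra all_field.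
From Stdlib Require Import ClassicalEpsilon.
Set Implicit Arguments. Unset Strict Implicit. Unset Printing Implicit Defensive.
Import Order.TTheory GRing.Theory Num.Theory.
Local Open Scope ring_scope.

(* Qbar is modelled by algC, the algebraic closure of Q in C. *)

Definition minpolyQ (x : algC) : {poly algC} := minCpoly x.

Definition degQ (x : algC) : nat := (size (minpolyQ x)).-1.

Definition leadZ_pred (x : algC) : pred nat :=
  fun n => (0 < n)%N && ((n%:R *: minpolyQ x) \is a polyOver Num.int).

(* a_0 : the positive leading coefficient of the minimal polynomial of x in Z[t]
   (primitive, positive leading coefficient), i.e. the least n > 0 such that
   n * (monic minimal polynomial) lies in Z[t]. *)
Definition leadZ (x : algC) : nat :=
  match excluded_middle_informative (exists n, leadZ_pred x n) with
  | left H => ex_minn H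
  | right _ => 0%N
  end.

Definition conjugates (x : algC) : seq algC :=
  sval (closed_field_poly_normal (minpolyQ x)).

Definition weilH (x : algC) : algC :=
  (degQ x).-root ((leadZ x)%:R * \prod_(r <- conjugates x) Num.max 1 `|r|).

Definition ratpow (a : algC) (b : rat) : algC :=
  (absz (denq b)).-root (a ^ numq b).

From HB Require Import structures.
From mathcomp Require Import all_boot all_order all_algebra all_field.
From mathcomp Require Import zify.
From Stdlib Require Import ClassicalEpsilon.
Import Order.TTheory GRing.Theory Num.Theory.
Set Implicit Arguments. Unset Strict Implicit. Unset Printing Implicit Defensive.
Local Open Scope ring_scope.

(* Write d for the degree of alpha, a_0 for the leading coefficient of its
   primitive integer minimal polynomial and alpha_i for its conjugates, and put
   M(alpha) = a_0 prod_i max(1, |alpha_i|) = H(alpha) ^ d.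

   1. gamma = a_0 prod_(|alpha_i| > 1) alpha_i is an algebraic integer
      (a Gauss-type lemma: dividing an integral polynomial by monic linear
      factors keeps it integral), and |gamma| = M(alpha).
   2. beta = H(alpha) satisfies beta ^ (2d) = gamma * conj(gamma), hence is an
      algebraic integer; so H(beta) ^ d' = prod_s max(1, |s|) over the d'
      conjugates s of beta.
   3. Any conjugate s of beta is nu(beta) for an automorphism nu of Qbar, and
      |nu(gamma)| <= M(alpha) because nu permutes the alpha_i; hence |s| <= beta
      and H(beta) <= beta.
   4. Equality forces |s| = beta for all s (or beta = 1), so the constant
      coefficient of the minimal polynomial of beta is an integer of modulus
      beta ^ d'.  Conversely, if beta ^ q = a ^ k, every conjugate s satisfies
      s ^ q = a ^ k, so |s| = beta. *)

(* If multiplication by [x] maps a nonzero finitely generated Z-module of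
   complex numbers into itself, then [x] is an eigenvalue of an integer matrix,
   hence an algebraic integer. *)
Lemma Aint_of_stable_module (s : seq algC) x :
  has (fun y => y != 0) s -> {in s, forall z, x * z \in Cint_span s} ->
  x \in Aint.
Proof.
move=> nz_s sxs; pose n := size s; pose Y := in_tuple s.
have int_polyC (c : int) : (c%:~R : algC)%:P \is a polyOver Num.int_num_subdef.
  by rewrite raddfMz rpred_int.
pose v := \row_(i < n) Y`_i.
have nz_v : v != 0.
  case/hasP: nz_s => y ys nzy; have iy : (index y s < n)%N by rewrite index_mem.
  by apply/eqP => /rowP/(_ (Ordinal iy)); rewrite !mxE /= nth_index //; apply/eqP.
have sYS (i : 'I_n) : x * Y`_i \in Cint_span s by apply/sxs/mem_nth.
pose A := \matrix_(i, j < n) sval (sig_eqW (Cint_spanP Y _ (sYS j))) i.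
pose p := char_poly (map_mx (intr : int -> algC) A).
have : p \is a polyOver Num.int_num_subdef.
  rewrite rpred_sum // => sg _; rewrite rpredMsign rpred_prod // => j _.
  by rewrite !mxE /= rpredB ?rpredMn ?polyOverX.
apply: root_monic_Aint (char_poly_monic _).
rewrite -eigenvalue_root_char; apply/eigenvalueP; exists v => //.
apply/rowP=> j; case dAj: (sig_eqW (Cint_spanP Y _ (sYS j))) => [a DxY].
by rewrite !mxE DxY; apply: eq_bigr => i _; rewrite !mxE dAj /= mulrzr.
Qed.

(* Criterion for integrality: if every [x * t ^+ e] with [e <= N] is the value
   at [t] of a polynomial of size at most [N.+1] whose coefficients lie in any
   subring containing the (integral) coefficients of [F], then [x] is integral:
   [x] stabilises the finitely generated module spanned by the [y * t ^+ j]. *)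
Lemma Aint_of_bounded_multiples (F : {poly algC}) (t x : algC) (N : nat) :
  F \is a polyOver Aint ->
  (forall S : subringClosed algC, F \is a polyOver S ->
     forall e, (e <= N)%N ->
     exists2 q : {poly algC}, q \is a polyOver S &
       (size q <= N.+1)%N /\ x * t ^+ e = q.[t]) ->
  x \in Aint.
Proof.
move=> AF hyp.
have FA : {subset (F : seq algC) <= Aint}.
  by move=> c /(nthP 0) [i _ <-]; apply: (polyOverP AF).
have [S [ringS FS] [[m Y] /= YS SP]] := Aint_subring_exists FA.
pose SR : subringClosed algC := HB.pack S (GRing.isSubringClosed.Build _ S ringS).
have FSR : F \is a polyOver SR.
  apply/polyOverP => i; have [iF | Fi] := ltnP i (size F).
    by apply/FS/mem_nth.
  by rewrite nth_default // (rpred0 SR).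
pose s := [seq y * t ^+ j | y <- (Y : seq algC), j <- iota 0 N.+1].
have Ys (l : 'I_m) (j : nat) : (j <= N)%N -> Y`_l * t ^+ j \in s.
  move=> jN; apply/allpairsP; exists (Y`_l, j); split => //.
    by apply: mem_nth; rewrite size_tuple.
  by rewrite mem_iota add0n ltnS.
apply: (Aint_of_stable_module (s := s)).
  have /SP [a Da] := rpred1 SR.
  have [l nzl] : exists l : 'I_m, Y`_l != 0.
    apply/existsP; apply: contraT; rewrite negb_exists => /forallP Y0.
    suff : (1 : algC) = 0 by move/eqP; rewrite oner_eq0.
    by rewrite Da big1 // => l _; move/negPn/eqP: (Y0 l) => ->; rewrite mul0rz.
  by apply/hasP; exists (Y`_l * t ^+ 0); rewrite ?Ys // expr0 mulr1.
move=> z /allpairsP [[y j] [yY jN ->]].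
move: jN; rewrite mem_iota add0n ltnS => jN.
have [q Sq [szq Dq]] := hyp SR FSR j jN.
have ySR : y \in SR by apply: YS.
rewrite mulrCA Dq horner_coef mulr_sumr; apply: rpred_sum => i _.
have /SP [a Da] : y * q`_i \in SR by rewrite rpredM // (polyOverP Sq).
rewrite mulrA Da mulr_suml; apply: rpred_sum => l _.
by rewrite mulrzAl rpredMz // mem_Cint_span // Ys // -ltnS (leq_trans _ szq).
Qed.

Section ShiftedQuotient.
Variables (R : comNzRingType) (G : {poly R}) (t : R).
Let F := ('X - t%:P) * G.

Lemma horner_drop_XsubC_mul m : (drop_poly m.+1 F).[t] = G`_m.
Proof.
suff -> : drop_poly m.+1 F = ('X - t%:P) * drop_poly m.+1 G + (G`_m)%:P.
  by rewrite hornerD hornerM hornerXsubC subrr mul0r add0r hornerC.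
apply/polyP => i; rewrite coefD coefC coef_drop_poly /F !mulrBl !coefB.
rewrite !coefXM !coefCM coef_drop_poly addnS /=.
case: i => [|i] /=; rewrite coef_drop_poly ?addr0.
  by rewrite !add0n add0r addrC.
by rewrite !addSn !addnS.
Qed.

Lemma horner_take_XsubC_mul m :
  (take_poly m.+1 F).[t] = - (G`_m * t ^+ m.+1).
Proof.
have F_t : F.[t] = 0 by rewrite hornerM hornerXsubC subrr mul0r.
have := congr1 (horner^~ t) (poly_take_drop m.+1 F).
rewrite /= hornerD hornerM hornerXn horner_drop_XsubC_mul F_t.
by move/eqP; rewrite addr_eq0 => /eqP.
Qed.

End ShiftedQuotient.

Lemma polyOver_drop (R : nzRingType) (S : addrClosed R) m (p : {poly R}) :
  p \is a polyOver S -> drop_poly m p \is a polyOver S.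
Proof. by move=> /polyOverP Sp; apply/polyOverP => i; rewrite coef_drop_poly Sp. Qed.

Lemma polyOver_take (R : nzRingType) (S : addrClosed R) m (p : {poly R}) :
  p \is a polyOver S -> take_poly m p \is a polyOver S.
Proof.
move=> /polyOverP Sp; apply/polyOverP => i.
by rewrite coef_take_poly; case: ifP; rewrite ?rpred0.
Qed.

(* Each [G`_k * t ^+ e] is the value at [t] of
   a shifted high or low part of [('X - t) * G], so the criterion above
   applies. *)
Lemma Aint_div_XsubC (G : {poly algC}) t :
  ('X - t%:P) * G \is a polyOver Aint -> G \is a polyOver Aint.
Proof.
set F := _ * G => AF; apply/polyOverP => k.
have [kG | Gk] := ltnP k (size G); last by rewrite nth_default.
have szF : (size F <= (size G).+1)%N.
  by rewrite (leq_trans (size_polyMleq _ _)) // size_XsubC.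
apply: (Aint_of_bounded_multiples (t := t) (N := size G) AF) => S SF e eG.
have [ek | ke] := leqP e k.
  exists (drop_poly k.+1 F * 'X^e); first by rewrite rpredM ?polyOverXn ?polyOver_drop.
  split; last by rewrite hornerM hornerXn /F horner_drop_XsubC_mul.
  rewrite (leq_trans (size_polyMleq _ _)) // size_polyXn size_drop_poly; lia.
exists (- (take_poly k.+1 F * 'X^(e - k.+1))).
  by rewrite rpredN rpredM ?polyOverXn ?polyOver_take.
split; last first.
  rewrite hornerN hornerM hornerXn /F horner_take_XsubC_mul.
  by rewrite mulNr opprK -mulrA -exprD subnKC.
rewrite size_polyN (leq_trans (size_polyMleq _ _)) // size_polyXn.
rewrite addnS /= (leq_trans _ (leqW eG)) //.
by rewrite -[leqRHS](subnKC ke) leq_add2r size_take_poly.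
Qed.

Lemma Aint_div_prod_XsubC (rs : seq algC) (H : {poly algC}) :
  (\prod_(r <- rs) ('X - r%:P)) * H \is a polyOver Aint -> H \is a polyOver Aint.
Proof.
elim: rs => [|r rs IH]; first by rewrite big_nil mul1r.
by rewrite big_cons -mulrA => /Aint_div_XsubC /IH.
Qed.

(* A number some positive power of which is integral is itself integral:
   it is a root of the monic integer polynomial [minCpoly c \Po 'X^m]. *)
Lemma Aint_rootX (y : algC) m : (0 < m)%N -> y ^+ m \in Aint -> y \in Aint.
Proof.
move=> m_gt0 Aym; pose q := minCpoly (y ^+ m) \Po 'X^m.
apply: (@root_monic_Aint q).
- by rewrite /root horner_comp hornerXn; apply: root_minCpoly.
- apply/monicP; rewrite lead_coef_comp ?size_polyXn ?ltnS //.
  by rewrite lead_coefXn expr1n mulr1; apply/monicP/minCpoly_monic.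
- by rewrite polyOver_comp ?polyOverXn.
Qed.

(* The leading coefficient [a_0]: a positive integer clearing the denominators
   of the monic minimal polynomial exists (e.g. the product of the
   denominators), so [leadZ x] is the least such integer. *)
Lemma leadZ_exists x : exists n, leadZ_pred x n.
Proof.
have [q [Dq _] _] := minCpolyP x.
pose n := (\prod_(i < size q) absz (denq q`_i))%N.
have n_gt0 : (0 < n)%N by rewrite prodn_gt0 // => i; rewrite absz_gt0 denq_neq0.
exists n; rewrite /leadZ_pred n_gt0 /minpolyQ Dq /=.
apply/polyOverP => i; rewrite coefZ coef_map /=.
have [iq | qi] := ltnP i (size q); last by rewrite nth_default // rmorph0 mulr0.
rewrite /n (bigD1 (Ordinal iq)) //= natrM -mulrA mulrC -mulrA.
have -> : ((absz (denq q`_i))%:R : algC) = ratr ((denq q`_i)%:~R).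
  by rewrite rmorph_int -[X in X%:~R]gez0_abs ?ltW ?denq_gt0.
by rewrite -rmorphM /= -numqE rmorph_int rpredM ?rpred_nat ?rpred_int.
Qed.

Lemma leadZP x :
  leadZ_pred x (leadZ x) /\ forall m, leadZ_pred x m -> (leadZ x <= m)%N.
Proof.
rewrite /leadZ; case: excluded_middle_informative => [ex | /(_ (leadZ_exists x))] //.
by case: ex_minnP.
Qed.

Lemma leadZ_gt0 x : (0 < leadZ x)%N.
Proof. by have [/andP []] := leadZP x. Qed.

Lemma leadZ_int x : (leadZ x)%:R *: minpolyQ x \is a polyOver Num.int.
Proof. by have [/andP []] := leadZP x. Qed.

Lemma leadZ_Aint x : x \in Aint -> leadZ x = 1%N.
Proof.
move=> Ax; have [_ leadZ_min] := leadZP x.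
have : (leadZ x <= 1)%N by apply: leadZ_min; rewrite /leadZ_pred /= scale1r.
by have := leadZ_gt0 x; case: (leadZ x) => [|[|]].
Qed.

Lemma minCpoly_conjugates x :
  minCpoly x = \prod_(r <- conjugates x) ('X - r%:P).
Proof.
rewrite /conjugates; case: closed_field_poly_normal => rs /= Drs.
by rewrite /minpolyQ in Drs; rewrite {1}Drs (monicP (minCpoly_monic x)) scale1r.
Qed.

Lemma size_conjugates x : size (conjugates x) = degQ x.
Proof. by rewrite /degQ /minpolyQ minCpoly_conjugates size_prod_XsubC. Qed.

Lemma degQ_gt0 x : (0 < degQ x)%N.
Proof. by rewrite /degQ /minpolyQ -subn1 subn_gt0 size_minCpoly. Qed.

Lemma root_conjugates x s : (s \in conjugates x) = root (minCpoly x) s.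
Proof. by rewrite minCpoly_conjugates root_prod_XsubC. Qed.

Lemma perm_conjugates_aut x (mu : {rmorphism algC -> algC}) :
  perm_eq (map mu (conjugates x)) (conjugates x).
Proof.
have [q [Dq _] _] := minCpolyP x.
apply: prod_XsubC_eq; rewrite -minCpoly_conjugates big_map.
under eq_bigr do rewrite -(map_polyXsubC mu).
rewrite -rmorph_prod -minCpoly_conjugates Dq /= -map_poly_comp.
by apply: eq_map_poly => a /=; apply: fmorph_rat.
Qed.

(* In a number field [Qn] embedded in [algC], an element whose image is a
   conjugate of the image of [a] is a root of the minimal polynomial of [a]
   over Q: that polynomial has rational coefficients, so its image is a
   rational polynomial vanishing at [QnC a], hence a multiple of
   [minCpoly (QnC a)]. *)
Lemma root_minPoly_num_field (Qn : fieldExtType rat)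
    (QnC : {rmorphism Qn -> algC}) (a b : Qn) :
  root (minCpoly (QnC a)) (QnC b) -> root (minPoly 1 a) b.
Proof.
move=> rb; have [q [Dq _] minq] := minCpolyP (QnC a).
have ratP i : (minPoly 1 a)`_i \in 1%VS by apply/polyOverP/minPolyOver.
have rat_coef i := sig_eqW (vlineP _ _ (ratP i)).
pose q1 := \poly_(i < size (minPoly 1 a)) sval (rat_coef i).
have Dq1 : map_poly QnC (minPoly 1 a) = map_poly ratr q1.
  apply/polyP=> i; rewrite coef_poly coef_map coef_poly /=.
  case: ifP => _; rewrite ?rmorph0 //; case: (rat_coef i) => c /= ->.
  by rewrite alg_num_field fmorph_rat.
have : root (map_poly ratr q1) (QnC a) by rewrite -Dq1 fmorph_root root_minPoly.
rewrite minq => /dvdpP [r Dr].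
by rewrite -(fmorph_root QnC) Dq1 Dr rmorphM rootM /= -Dq rb orbT.
Qed.

(* Any two conjugate algebraic numbers are exchanged by an automorphism of
   [algC]: extend [b |-> s] from Q(b) to the splitting field of the minimal
   polynomial of [b], then from there to all of [algC]. *)
Lemma conjugate_aut (b s : algC) :
  root (minCpoly b) s -> exists nu : {rmorphism algC -> algC}, nu b = s.
Proof.
move=> rs.
have [Qn [QnC [rs1 Drs1 gen]]] := num_field_exists (conjugates b).
have [bn _ Dbn] : exists2 bn, bn \in rs1 & b = QnC bn.
  by apply/mapP; rewrite Drs1 root_conjugates root_minCpoly.
have [sn _ Dsn] : exists2 sn, sn \in rs1 & s = QnC sn.
  by apply/mapP; rewrite Drs1 root_conjugates.
have [q [Dq _] _] := minCpolyP b.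
pose p1 : {poly Qn} := map_poly (in_alg Qn) q.
have p1Q : p1 \is a polyOver 1%VS.
  by apply/polyOverP => i; rewrite coef_map /= memvZ // mem1v.
have Dp1 : p1 = \prod_(z <- rs1) ('X - z%:P).
  apply: (@map_poly_inj _ _ QnC); rewrite rmorph_prod /=.
  under [RHS]eq_bigr do rewrite map_polyXsubC.
  rewrite -(big_map QnC xpredT (fun r => 'X - r%:P)) Drs1 -minCpoly_conjugates.
  rewrite Dq -map_poly_comp.
  by apply: eq_map_poly => c /=; rewrite alg_num_field fmorph_rat.
have splitp1 : splittingFieldFor <<1; bn>> p1 fullv.
  exists rs1; first by rewrite Dp1 eqpxx.
  by apply/eqP; rewrite eqEsubv subvf -gen adjoin_seqSl // subv_adjoin.
have rsn : root (minPoly 1 bn) sn.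
  by apply: (root_minPoly_num_field (QnC := QnC)); rewrite -Dbn -Dsn.
have homf : kHom 1 <<1; bn>> (kHomExtend 1 \1 bn sn).
  by apply: kHomExtendP; rewrite ?kHom1 ?lfun1_poly.
have [g homg Dg] := kHom_extends (subv_adjoin 1 bn) homf p1Q splitp1.
have gbn : g bn = sn.
  by rewrite -Dg ?memv_adjoin // (kHomExtend_val (kHom1 1 1)) ?lfun1_poly.
pose gRM : {rmorphism Qn -> Qn} := HB.pack (fun_of_lfun g)
  (GRing.isMonoidMorphism.Build _ _ g (kHom_monoid_morphism homg)).
have [nu Dnu] := extend_algC_subfield_aut QnC gRM.
by exists nu; rewrite Dbn -Dnu /= gbn.
Qed.

Section BoundedProducts.
Variable R : numDomainType.

Lemma prodr_const_seq (I : Type) (s : seq I) (c : R) :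
  \prod_(i <- s) c = c ^+ size s.
Proof. by rewrite big_const_seq count_predT iter_mulr mulr1. Qed.

Lemma prod_le_pow (I : eqType) (s : seq I) (f : I -> R) c :
  (forall i, i \in s -> 0 <= f i <= c) -> \prod_(i <- s) f i <= c ^+ size s.
Proof.
move=> f_bd; rewrite -prodr_const_seq big_seq [X in _ <= X]big_seq.
exact: ler_prod.
Qed.

Lemma prod_eq_pow (I : eqType) (s : seq I) (f : I -> R) c :
  0 < c -> (forall i, i \in s -> 0 < f i <= c) ->
  \prod_(i <- s) f i = c ^+ size s -> forall i, i \in s -> f i = c.
Proof.
move=> c_gt0; elim: s => [|i s IH] f_bd //=.
rewrite big_cons exprS => Ds.
have /andP [fi_gt0 fi_le] := f_bd i (mem_head _ _).
have fs_bd j : j \in s -> 0 < f j <= c by move=> js; rewrite f_bd // in_cons js orbT.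
have prod_le : \prod_(j <- s) f j <= c ^+ size s.
  by apply: prod_le_pow => j /fs_bd /andP [/ltW -> ->].
have fi_c : f i = c.
  move: fi_le; rewrite le_eqVlt => /predU1P [// | fi_lt].
  have : f i * \prod_(j <- s) f j < c * c ^+ size s.
    apply: (le_lt_trans (y := f i * c ^+ size s)); first by rewrite ler_pM2l.
    by rewrite ltr_pM2r // exprn_gt0.
  by rewrite Ds ltxx.
move=> j; rewrite in_cons => /predU1P [-> // | js].
apply: IH => //; apply: (mulfI (x := c)); first by rewrite gt_eqF.
by rewrite -Ds fi_c.
Qed.

End BoundedProducts.

Lemma max1E (x : algC) : Num.max 1 x = if 1 < x then x else 1.
Proof. by []. Qed.

Lemma max1_ge1 (x : algC) : 1 <= Num.max 1 x.
Proof. by rewrite max1E; case: ifP => // /ltW. Qed.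

Lemma max1_ge (x : algC) : x \is Num.real -> x <= Num.max 1 x.
Proof. by move=> x_real; rewrite max1E; case: ifP => // /negbT; rewrite -real_leNgt. Qed.

Lemma rootCXK n (x : algC) : (0 < n)%N -> 0 <= x -> n.-root (x ^+ n) = x.
Proof.
move=> n_gt0 x_ge0; apply/eqP.
by rewrite -(eqrXn2 n_gt0) ?rootCK ?rootC_ge0 ?exprn_ge0.
Qed.

Definition mahler (x : algC) : algC :=
  (leadZ x)%:R * \prod_(r <- conjugates x) Num.max 1 `|r|.

Definition gamma (x : algC) : algC :=
  (leadZ x)%:R * \prod_(r <- conjugates x | 1 < `|r|) r.

Lemma mahler_ge1 x : 1 <= mahler x.
Proof.
apply: mulr_ege1; first by rewrite ler1n leadZ_gt0.
apply: (big_ind (fun y => 1 <= y)) => // [y z|r _]; first exact: mulr_ege1.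
exact: max1_ge1.
Qed.

Lemma weilH_pow x : weilH x ^+ degQ x = mahler x.
Proof. by rewrite rootCK ?degQ_gt0. Qed.

Lemma weilH_ge1 x : 1 <= weilH x.
Proof. by rewrite rootC_ge1 ?degQ_gt0 ?mahler_ge1. Qed.

Lemma weilH_ge0 x : 0 <= weilH x.
Proof. exact: le_trans ler01 (weilH_ge1 x). Qed.

(* Each kept factor has modulus [|r| = max(1, |r|)], the others contribute 1. *)
Lemma norm_gamma x : `|gamma x| = mahler x.
Proof. by rewrite normrM normr_nat normr_prod big_mkcond. Qed.

(* Indeed [a_0 * prod_(r | P r) ('X - r)] is obtained from the
   integer polynomial [a_0 * minCpoly x] by removing the other linear factors,
   so its constant coefficient is integral. *)
Lemma Aint_lead_subprod x (P : pred algC) :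
  (leadZ x)%:R * \prod_(r <- conjugates x | P r) r \in Aint.
Proof.
set rs := conjugates x; set a0 := (leadZ x)%:R.
have Aa0p : a0%:P * \prod_(r <- rs | P r) ('X - r%:P) \is a polyOver Aint.
  apply: (@Aint_div_prod_XsubC [seq r <- rs | ~~ P r]).
  rewrite big_filter mul_polyC -scalerAr mulrC.
  rewrite (_ : _ * _ = minCpoly x) ?(polyOverS Aint_Cint) ?leadZ_int //.
  by rewrite minCpoly_conjugates [RHS](bigID P).
have := polyOverP Aa0p 0; rewrite coefCM -big_filter coef0_prod_XsubC big_filter.
by rewrite mulrCA rpredMsign.
Qed.

Lemma gamma_Aint x : gamma x \in Aint.
Proof. exact: Aint_lead_subprod. Qed.

(* No conjugate of [gamma x] is larger than [M(x)] in modulus: an automorphism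
   only permutes the conjugates of [x] inside the product. *)
Lemma norm_aut_gamma_le x (mu : {rmorphism algC -> algC}) :
  `|mu (gamma x)| <= mahler x.
Proof.
rewrite rmorphM rmorph_nat rmorph_prod normrM normr_nat normr_prod.
rewrite ler_wpM2l // -[leRHS](perm_big _ (perm_conjugates_aut x mu)) big_map.
rewrite big_mkcond /=; apply: ler_prod => r _.
by case: ifP => _; rewrite ?ler01 ?max1_ge1 ?normr_ge0 ?max1_ge ?normr_real.
Qed.

(* [H(x) ^ (2d) = gamma * conj(gamma)] is integral, hence so is [H(x)]. *)
Lemma weilH_Aint x : weilH x \in Aint.
Proof.
apply: (@Aint_rootX _ (degQ x * 2)); first by rewrite muln_gt0 degQ_gt0.
rewrite exprM weilH_pow -norm_gamma normCK rpredM ?gamma_Aint //.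
by rewrite (Aint_aut Num.Def.conjC) gamma_Aint.
Qed.

(* Every conjugate [s] of [H(x)] satisfies [|s| <= H(x)]: if [nu] maps [H(x)]
   to [s], then [|s| ^ (2d) = |nu gamma| * |nu (conj gamma)| <= M(x) ^ 2]. *)
Lemma norm_conjugate_weilH_le x s :
  root (minCpoly (weilH x)) s -> `|s| <= weilH x.
Proof.
move=> rs; have [nu Dnu] := conjugate_aut rs.
have d_gt0 : (0 < degQ x * 2)%N by rewrite muln_gt0 degQ_gt0.
rewrite -(ler_pXn2r d_gt0) ?nnegrE ?normr_ge0 ?weilH_ge0 //.
rewrite [X in _ <= X]exprM weilH_pow expr2 -normrX -Dnu -rmorphXn exprM.
rewrite weilH_pow -norm_gamma normCK rmorphM normrM norm_gamma.
apply: ler_pM => //; first exact: norm_aut_gamma_le.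
exact: (norm_aut_gamma_le x (nu \o Num.Def.conjC)%FUN).
Qed.

Lemma weilH_Aint_E y : y \in Aint ->
  weilH y = (degQ y).-root (\prod_(s <- conjugates y) Num.max 1 `|s|).
Proof. by move=> Ay; rewrite /weilH leadZ_Aint // mul1r. Qed.

Lemma ratpow_inv_nat (a : algC) n : (0 < n)%N -> ratpow a (n%:R^-1) = n.-root a.
Proof.
move=> n_gt0; have n_neq0 : n%:Z != 0 by rewrite eqz_nat -lt0n.
have den : denq (n%:R^-1) = n%:Z by rewrite -[n%:R]/(n%:Z%:~R) denqVz.
have num : numq (n%:R^-1) = 1.
  by apply: (@intr_inj rat); rewrite numqE den mulVf // pnatr_eq0 -lt0n.
by rewrite /ratpow num den expr1z.
Qed.

Section HeightOfHeight.
Variable alpha : algC.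
Let beta := weilH alpha.

(* Since [beta] is an algebraic integer, [H(beta) ^ d' = prod_s max(1, |s|)]
   over its conjugates [s] ([d'] its degree); each factor lies in [(0, beta]]. *)
Lemma max1_conjugate_le s : s \in conjugates beta -> 0 < Num.max 1 `|s| <= beta.
Proof.
rewrite root_conjugates => rs.
rewrite (lt_le_trans ltr01) ?max1_ge1 //= max1E.
by case: ifP => _; [exact: norm_conjugate_weilH_le rs | exact: weilH_ge1].
Qed.

Lemma prod_conjugates_const (f : algC -> algC) :
  (forall s, s \in conjugates beta -> f s = beta) ->
  \prod_(s <- conjugates beta) f s = beta ^+ degQ beta.
Proof.
by move=> f_beta; rewrite (eq_big_seq _ f_beta) prodr_const_seq size_conjugates.
Qed.

Lemma weilH_weilH_pow :
  weilH beta ^+ degQ beta = \prod_(s <- conjugates beta) Num.max 1 `|s|.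
Proof. by rewrite weilH_Aint_E ?weilH_Aint // rootCK ?degQ_gt0. Qed.

Lemma weilH_weilH_le : weilH beta <= beta.
Proof.
rewrite -(ler_pXn2r (degQ_gt0 beta)) ?nnegrE ?weilH_ge0 //.
rewrite weilH_weilH_pow -size_conjugates.
by apply: prod_le_pow => s /max1_conjugate_le /andP [/ltW -> ->].
Qed.

(* Equality forces all conjugates of [beta] onto the circle of radius [beta]
   (when [beta > 1]); then the constant coefficient of its minimal polynomial
   is an integer of modulus [m = beta ^ d'], so [beta = m ^ (1/d')]. *)
Lemma weilH_weilH_eq_ratpow : weilH beta = beta ->
  exists (a : nat) (b : rat), 0 < b /\ beta = ratpow a%:R b.
Proof.
move=> Hbeta.
have beta_gt0 : 0 < beta by rewrite (lt_le_trans ltr01) ?weilH_ge1.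
have prod_eq :
    \prod_(s <- conjugates beta) Num.max 1 `|s| = beta ^+ size (conjugates beta).
  by rewrite -weilH_weilH_pow Hbeta size_conjugates.
have all_beta := prod_eq_pow beta_gt0 max1_conjugate_le prod_eq.
have [beta1 | beta_neq1] := eqVneq beta 1.
  by exists 1%N, 1; split => //; rewrite /ratpow beta1 expr1z rootC1.
have norm_s s : s \in conjugates beta -> `|s| = beta.
  move/all_beta; rewrite max1E; case: ifP => _ Ds //.
  by rewrite Ds eqxx in beta_neq1.
have Zc0 : (minCpoly beta)`_0 \in Num.int by apply/polyOverP/weilH_Aint.
have [m Dm] := natrP (natr_norm_int Zc0).
exists m, ((degQ beta)%:R^-1); split; first by rewrite invr_gt0 ltr0n degQ_gt0.
rewrite ratpow_inv_nat ?degQ_gt0 // -Dm minCpoly_conjugates coef0_prod_XsubC.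
rewrite normrM normrX normrN1 expr1n mul1r normr_prod prod_conjugates_const //.
by rewrite rootCXK ?degQ_gt0 ?weilH_ge0.
Qed.

(* Conversely, if [beta ^ q = a ^ k] then every conjugate [s] of [beta] satisfies
   [s ^ q = a ^ k] too, so [|s| = beta] and [H(beta) = beta]. *)
Lemma ratpow_weilH_weilH (a : nat) (b : rat) : 0 < b -> beta = ratpow a%:R b ->
  weilH beta = beta.
Proof.
move=> b_gt0 Dbeta.
have : 0 < numq b by rewrite numq_gt0.
case Dk : (numq b) => [k|//] _.
have q_gt0 : (0 < absz (denq b))%N by rewrite absz_gt0 denq_neq0.
set q := absz (denq b) in q_gt0.
have beta_q : beta ^+ q = (a ^ k)%:R by rewrite Dbeta /ratpow Dk -/q rootCK // natrX.
pose r : {poly rat} := 'X^q - ((a ^ k)%:R)%:P.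
have Dr : map_poly ratr r = 'X^q - ((a ^ k)%:R)%:P :> {poly algC}.
  by rewrite rmorphB /= map_polyXn map_polyC /= rmorph_nat.
have dvd_min : minCpoly beta %| map_poly ratr r.
  have [q1 [Dq1 _] minq] := minCpolyP beta.
  by rewrite Dq1 dvdp_map -minq Dr /root !hornerE beta_q subrr.
have norm_s s : s \in conjugates beta -> `|s| = beta.
  rewrite root_conjugates => /(root_dvdp dvd_min).
  rewrite Dr /root !hornerE subr_eq0 => /eqP s_q.
  apply/eqP; rewrite -(eqrXn2 q_gt0) ?normr_ge0 ?weilH_ge0 //.
  by rewrite -normrX s_q beta_q normr_nat.
rewrite weilH_Aint_E ?weilH_Aint // prod_conjugates_const.
  by rewrite rootCXK ?degQ_gt0 ?weilH_ge0.
by move=> s /norm_s ->; apply/max_r/weilH_ge1.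
Qed.

End HeightOfHeight.

Theorem lemma9p2 (alpha : algC) :
  weilH (weilH alpha) <= weilH alpha /\
  (weilH (weilH alpha) = weilH alpha <->
   exists (a : nat) (b : rat), 0 < b /\ weilH alpha = ratpow a%:R b).
Proof.
split; first exact: weilH_weilH_le.
split; first exact: weilH_weilH_eq_ratpow.
by case=> a [b [b_gt0 Dbeta]]; apply: (ratpow_weilH_weilH b_gt0 Dbeta).
Qed.
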